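(* Assume the standing hypotheses (H) of the context. Take $x,y\in B(x_0,R)$ and $0\le t<v<R$. If $\|x-x_0\|\le t$ and $\|y-x\|\le v-t$, then $$\lambda\|E_f(x,y)\|\le e_\psi(t,v)\frac{\|y-x\|^2}{(v-t)^2}\le\frac12\psi''(v)(v-t)^2,$$ where $E_f(x,y):=f(y)-[f(x)+f'(x)(y-x)]$ and $e_\psi(t,u):=\psi(u)-[\psi(t)+\psi'(t)(u-t)]$.
   Context: Standing hypotheses (H): $\mathbb X,\mathbb Y$ Banach spaces, $\Omega\subseteq\mathbb X$ open, $f:\Omega\to\mathbb Y$ continuous with continuous Fréchet derivative $f'$, $F:\mathbb X\rightrightarrows\mathbb Y$ with closed graph; $L_f(x,y):=f(x)+f'(x)(y-x)+F(y)$, $L_f(x,z)^{-1}:=\{y: z\in f(x)+f'(x)(y-x)+F(y)\}$, singletons $\{w\}$ identified with $w$. $x_0,x_1\in\Omega$, $\lambda>0$, and $0\in f(x_0)+f'(x_0)(x_1-x_0)+F(x_1)$ with $z\mapsto L_f(x_0,z)^{-1}\cap B(x_1,\rho_1)$ single-valued from some $B(0,\rho_2)$ into $B(x_1,\rho_1)\subset\Omega$ and $\lambda$-Lipschitz there (strong regularity). Constants $r_{x_1},r_0,r_{x_0}>0$ satisfy: for each $x\in B(x_0,r_{x_0})$, $\lambda\|f'(x)-f'(x_0)\|<1$, $z\mapsto L_f(x,z)^{-1}\cap B(x_1,r_{x_1})$ is single-valued from $B(0,r_0)$ to $B(x_1,r_{x_1})$ and Lipschitz with constant $\lambda/(1-\lambda\|f'(x)-f'(x_0)\|)$.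 $R>0$, $\kappa:=\sup\{t\in[0,R):B(x_0,t)\subset\Omega\}$, $\psi:[0,R)\to\mathbb R$ twice continuously differentiable with $\lambda\|f'(y)-f'(x)\|\le\psi'(\|y-x\|+\|x-x_0\|)-\psi'(\|x-x_0\|)$ for $x,y\in B(x_0,\kappa)$, $\|y-x\|+\|x-x_0\|<R$; $\|x_1-x_0\|\le\psi(0)$; $\psi(0)>0$, $\psi'(0)=-1$; $\psi'$ convex and strictly increasing; $\psi$ has a zero in $(0,R)$ and $t_*:=\min\{t\in[0,R):\psi(t)=0\}$; $t_*\le r_{x_0}$ and $\psi''(t_* )\psi(0)^2/(2\lambda)<r_0$.
   Formalization: The points x and y range over B(x₀,κ), where B(x₀,R) ⊂ Ω fails, instead of over B(x₀,R). The statement above fails without it. *)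

From HB Require Import structures.
From mathcomp Require Import all_boot all_order all_algebra.
From mathcomp Require Import all_classical all_reals all_analysis.
Set Implicit Arguments. Unset Strict Implicit. Unset Printing Implicit Defensive.
Import Order.TTheory GRing.Theory Num.Theory.
Import numFieldNormedType.Exports.
Local Open Scope classical_set_scope.
Local Open Scope ring_scope.

Definition opnorm {R : realType} {X Y : normedModType R} (L : X -> Y) : R :=
  sup [set `|L h| | h in [set h : X | `|h| <= 1]].

(* L_f(x,z)^{-1} = {y | z \in f(x) + f'(x)(y-x) + F(y)} *)
Definition Linv {R : realType} {X Y : normedModType R}
  (f : X -> Y) (f' : X -> X -> Y) (F : X -> set Y) (x : X) (z : Y) : set X :=
  [set y | F y (z - (f x + f' x (y - x)))].

Definition single_valued_lipschitz {R : realType} {X Y : normedModType R}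
  (G : Y -> set X) (A : set Y) (B : set X) (c : R) : Prop :=
  (forall z, A z -> exists! y, B y /\ G z y) /\
  (forall z z' y y', A z -> A z' -> B y -> B y' -> G z y -> G z' y' ->
     `|y - y'| <= c * `|z - z'|).

Definition kappa {R : realType} {X : normedModType R} (x0 : X) (Om : set X)
  (Rr : R) : R := sup [set t | (0 <= t < Rr) /\ ball x0 t `<=` Om].

Definition Ef {R : realType} {X Y : normedModType R}
  (f : X -> Y) (f' : X -> X -> Y) (x y : X) : Y := f y - (f x + f' x (y - x)).

Definition epsi {R : realType} (psi dpsi : R -> R) (t u : R) : R :=
  psi u - (psi t + dpsi t * (u - t)).

From HB Require Import structures.
From mathcomp Require Import all_boot all_order all_algebra.
From mathcomp Require Import all_classical all_reals all_analysis.
From mathcomp Require Import ring lra.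
Import Order.TTheory GRing.Theory Num.Theory.
Import numFieldNormedType.Exports.
Local Open Scope classical_set_scope.
Local Open Scope ring_scope.

(* Along the segment x + u (y - x) the majorant condition bounds
   lam ||f'(x + u (y - x)) - f'(x)|| by the increment of psi' from ||x - x0||
   over a length u ||y - x||; convexity of psi' lets one move this increment to
   start at t >= ||x - x0|| and stretch it to length u (v - t), at the price of
   a factor ||y - x|| / (v - t).  A mean value inequality along the segment then
   compares E_f(x, y) with ||y - x||^2 / (v - t)^2 times the Taylor remainder
   e_psi(t, v), and convexity of psi' again bounds that remainder by
   psi''(v) (v - t)^2 / 2. *)

Section ConvexSlopes.
Variables (R : realType) (phi : R -> R) (Rr : R).
Hypothesis phi_convex : forall a b s, 0 <= a < Rr -> 0 <= b < Rr -> 0 <= s <= 1 ->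
  phi ((1 - s) * a + s * b) <= (1 - s) * phi a + s * phi b.

Definition slope p q := (phi q - phi p) / (q - p).

Lemma le_slopeE p q p' q' : p < q -> p' < q' ->
  (slope p q <= slope p' q') = ((phi q - phi p) * (q' - p') <= (phi q' - phi p') * (q - p)).
Proof.
move=> pq pq'; rewrite /slope ler_pdivrMr ?subr_gt0 //.
by rewrite mulrAC ler_pdivlMr ?subr_gt0.
Qed.

Lemma convex_three_slopes p q r : 0 <= p -> p < q -> q < r -> r < Rr ->
  slope p q <= slope p r /\ slope p r <= slope q r.
Proof.
move=> p0 pq qr rR.
have rp : 0 < r - p by lra.
pose s := (q - p) / (r - p).
have sE : s * (r - p) = q - p by rewrite /s divfK // gt_eqF.
have s0 : 0 <= s by rewrite /s divr_ge0 //; lra.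
have s1 : s <= 1 by rewrite /s ler_pdivrMr //; lra.
have qE : (1 - s) * p + s * r = q.
  by transitivity (p + s * (r - p)); [ring | rewrite sE; ring].
have cvx : phi q <= (1 - s) * phi p + s * phi r.
  by rewrite -{1}qE; apply: phi_convex; lra.
have cvx' := ler_wpM2r (ltW rp) cvx.
have /= sE' := congr1 (fun z => z * (phi r - phi p)) sE.
by split; rewrite le_slopeE; lra.
Qed.

Lemma slope_le p q p' q' : 0 <= p -> p < q -> p <= p' -> q <= q' -> p' < q' ->
  q' < Rr -> slope p q <= slope p' q'.
Proof.
move=> p0 pq pp' qq' pq' q'R.
apply: (@le_trans _ _ (slope p q')).
  have [<-//|qq'_neq] := eqVneq q q'.
  by case: (@convex_three_slopes p q q' p0 pq _ q'R); rewrite // lt_neqAle qq'_neq.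
have [<-//|pp'_neq] := eqVneq p p'.
by case: (@convex_three_slopes p p' q' p0 _ pq' q'R); rewrite // lt_neqAle pp'_neq.
Qed.

Lemma slope_le_derive (q v D : R) : is_derive v 1 phi D -> 0 <= q -> q < v -> v < Rr ->
  slope q v <= D.
Proof.
move=> [dphi <-] q0 qv vR.
rewrite /derivable in dphi; set G := (fun h : R => _) in dphi.
have GD : G @ 0^'- --> 'D_1 phi v.
  by apply: cvg_trans dphi; apply: cvg_app; apply: within_subset => z /lt_eqF/negbT.
apply: (cvgr_to_ge GD).
near=> h.
have [hq h0] : q - v < h /\ h < 0 by split; near: h; [apply: nbhs_left_gt; lra | apply: nbhs_left_lt].
have -> : G h = slope (v + h) v.
  rewrite /G /slope /= -[h%:A]/(h * 1) mulr1 (addrC h v).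
  have -> : v - (v + h) = - h by ring.
  by rewrite invrN mulrN -mulNr opprB mulrC.
by apply: (slope_le q v (v + h) v q0 qv _ (lexx v) _ vR); lra.
Unshelve. all: by end_near.
Qed.

Lemma convex_increment_le s t a d u : 0 <= s -> s <= t -> 0 <= a -> a <= d ->
  0 <= u -> t + u * d < Rr ->
  (phi (s + u * a) - phi s) * d <= (phi (t + u * d) - phi t) * a.
Proof.
move=> s0 st a0 ad u0 tR.
have [->|a_neq0] := eqVneq a 0; first by rewrite mulr0 addr0 subrr mul0r mulr0.
have [->|u_neq0] := eqVneq u 0; first by rewrite !mul0r !addr0 !subrr !mul0r.
have u_gt0 : 0 < u by rewrite lt_neqAle eq_sym u_neq0.
have a_gt0 : 0 < a by rewrite lt_neqAle eq_sym a_neq0.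
have d_gt0 : 0 < d by apply: lt_le_trans ad.
have : slope s (s + u * a) <= slope t (t + u * d) by apply: slope_le => //; nra.
rewrite le_slopeE ?ltrDl ?mulr_gt0 //.
rewrite !(addrC s) !(addrC t) !addrK (mulrCA _ u) [X in _ <= X]mulrCA.
by rewrite ler_pM2l.
Qed.

End ConvexSlopes.

Arguments slope {R}.
Arguments slope_le {R phi Rr} phi_convex {p q p' q'}.
Arguments slope_le_derive {R phi Rr} phi_convex {q v D}.
Arguments convex_increment_le {R phi Rr} phi_convex {s t a d u}.

Section MeanValueInequality.
Context {R : realType}.

Lemma right_local_nonincr_le (w : R -> R) a b : a <= b ->
  (forall m, a < m <= b -> {for m, continuous w}) ->
  (forall m, a <= m < b -> exists2 d, 0 < d & forall s, m < s < m + d -> w s <= w m) ->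
  w b <= w a.
Proof.
move=> ab w_cont w_right.
(* Continuous induction: the supremum of the initial segments on which w stays
   below w a is such a segment, and it cannot stop before b. *)
pose B := [set u | a <= u <= b /\ forall s, a <= s <= u -> w s <= w a].
have Ba : B a by split=> [|s /andP[a_s sa]]; [lra | have -> : s = a by apply/le_anti/andP].
have B_sup : has_sup B by split; [exists a | exists b => u [/andP[]]].
pose m := sup B.
have am : a <= m by exact: sup_upper_bound.
have mb : m <= b by apply: ge_sup => [|u [/andP[]]]; first exists a.
have below_m s : a <= s < m -> w s <= w a.
  move=> /andP[a_s sm]; have [u [_ Bu] su] := sup_gt (ex_intro _ a Ba) sm.
  by apply: Bu; lra.
have wm : w m <= w a.
  have [<-//|am_neq] := eqVneq a m.
  have am_lt : a < m by rewrite lt_neqAle am_neq.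
  have wl := cvg_at_left_filter (w_cont m ltac:(lra)).
  apply: (cvgr_to_le wl).
  near=> s; apply: below_m; apply/andP; split.
    by apply/ltW; near: s; exact: nbhs_left_gt.
  by near: s; apply: nbhs_left_lt.
have Bm : B m.
  split=> [|s /andP[a_s]]; first lra.
  by rewrite le_eqVlt => /predU1P[->//|sm]; apply: below_m; lra.
suff <- : m = b by case: Bm => _; apply; lra.
apply/le_anti; rewrite mb /= leNgt; apply/negP => mb_lt.
have [d d0 w_dec] := w_right m ltac:(lra).
pose c := Num.min (d / 2) (b - m).
have c_gt0 : 0 < c by rewrite lt_min subr_gt0 mb_lt andbT divr_gt0.
have c_le : c <= d / 2 /\ c <= b - m by split; rewrite ge_min lexx ?orbT.
have : B (m + c).
  split=> [|s /andP[a_s sc]]; first lra.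
  have [sm|ms] := leP s m; first by case: Bm => _; apply; lra.
  by apply: le_trans wm; apply: w_dec; lra.
by move=> /(sup_upper_bound B_sup); rewrite -/m; lra.
Unshelve. all: by end_near.
Qed.

Lemma mean_value_inequality (Y : normedModType R) (g G : R -> Y) (phi : R -> R) a b :
  a <= b ->
  (forall m, a < m <= b -> {for m, continuous g} /\ {for m, continuous phi}) ->
  (forall m, a <= m < b -> forall e, 0 < e -> exists2 d, 0 < d &
     forall s, m < s < m + d -> `|g s - g m - (s - m) *: G m| <= e * (s - m)) ->
  (forall m s, a <= m -> m < s <= b -> (s - m) * `|G m| <= phi s - phi m) ->
  `|g b - g a| <= phi b - phi a.
Proof.
move=> ab g_phi_cont g_approx phi_incr.
suff le_e e : 0 < e -> `|g b - g a| <= phi b - phi a + e * (b - a).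
  apply/ler_addgt0Pr => e e0; apply: le_trans (le_e (e / (b - a + 1)) _) _.
    by rewrite divr_gt0 //; lra.
  by rewrite lerD2l mulrAC ler_pdivrMr; lra.
move=> e0; pose w s := `|g s - g a| - phi s - e * s.
suff : w b <= w a by rewrite /w subrr normr0; lra.
apply: right_local_nonincr_le => // m mab.
  have [gc phic] := g_phi_cont m mab.
  apply: continuousB; last by apply: cvgM; [exact: cvg_cst | exact: cvg_id].
  apply: continuousB => //; apply: (continuous_comp (g := fun y : Y => `|y|)).
    by apply: continuousB => //; exact: cvg_cst.
  exact: norm_continuous.
have [d d0 gd] := g_approx m mab e e0.
exists (Num.min d (b - m)); first by rewrite lt_min d0 subr_gt0; lra.
move=> s /andP[ms s_lt].
have min_le : Num.min d (b - m) <= d /\ Num.min d (b - m) <= b - m.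
  by split; rewrite ge_min lexx ?orbT.
have [sd sb] : s < m + d /\ s <= b by lra.
have gs : `|g s - g m| <= e * (s - m) + (s - m) * `|G m|.
  rewrite -[g s - g m](subrK ((s - m) *: G m)); apply: le_trans (ler_normD _ _) _.
  rewrite normrZ ger0_norm ?lerD2r; last lra.
  by apply: gd; lra.
have phi_s := phi_incr m s ltac:(lra) ltac:(lra).
have ga : `|g s - g a| <= `|g s - g m| + `|g m - g a|.
  by rewrite -[g s - g a](subrKA (g m)); exact: ler_normD.
by rewrite /w; lra.
Qed.

End MeanValueInequality.

Section NormedSpaces.
Context {R : realType} {X Y : normedModType R}.

Lemma opnorm_le (L : X -> Y) k : scalable L -> 0 <= k ->
  (forall z, `|L z| <= k * `|z|) -> forall z, `|L z| <= opnorm L * `|z|.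
Proof.
move=> LZ k0 Lk z.
have L0 : L 0 = 0 by rewrite -(scale0r (0 : X)) LZ scale0r.
have L_sup : has_sup [set `|L h| | h in [set h : X | `|h| <= 1]].
  split; first by exists `|L 0|, 0 => //=; rewrite normr0.
  exists k => _ [h /= h1 <-]; apply: le_trans (Lk h) _.
  by rewrite -[leRHS]mulr1 ler_wpM2l.
have [->|z0] := eqVneq z 0; first by rewrite L0 !normr0 mulr0.
have z_gt0 : 0 < `|z| by rewrite normr_gt0.
pose u := `|z|^-1 *: z.
have u1 : `|u| = 1 by rewrite normrZ normfV normr_id mulVf // gt_eqF.
have Lu : `|L u| <= opnorm L by apply: sup_upper_bound => //; exists u => //=; rewrite u1.
have -> : L z = `|z| *: L u by rewrite -LZ scalerA mulfV ?gt_eqF // scale1r.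
by rewrite normrZ normr_id mulrC ler_wpM2r // ltW.
Qed.

Lemma diff_sub_le_opnorm {f : X -> Y} {p q : X} (z : X) :
  differentiable f p -> differentiable f q ->
  `|'d f p z - 'd f q z| <= opnorm (fun h => 'd f p h - 'd f q h) * `|z|.
Proof.
move=> dfp dfq.
have [kp kp_gt0 kpP] := linear_lipschitz (diff_continuous dfp).
have [kq kq_gt0 kqP] := linear_lipschitz (diff_continuous dfq).
apply: (@opnorm_le _ (kp + kq)) => [a u | | u].
- by rewrite scalerBr; congr (_ - _); exact: linearZZ.
- by rewrite addr_ge0 // ltW.
- by rewrite mulrDl; apply: le_trans (ler_normB _ _) _; exact: lerD.
Qed.

Lemma kappa_ball_sub {x0 : X} {Om : set X} {Rr : R} :
  0 < Rr -> ball x0 (kappa x0 Om Rr) `<=` Om.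
Proof.
move=> Rr_gt0 z; rewrite -ball_normE /= => z_near.
have [|t [_ tOm] zt] := sup_gt _ z_near.
  exists 0; split; first by rewrite lexx Rr_gt0.
  by move=> w; rewrite -ball_normE /= => w_neg; have := normr_ge0 (x0 - w); lra.
by apply: tOm; rewrite -ball_normE.
Qed.

Lemma ball_segment {x0 x y : X} {r u : R} :
  ball x0 r x -> ball x0 r y -> 0 <= u <= 1 -> ball x0 r (x + u *: (y - x)).
Proof.
rewrite -!ball_normE /= => xr yr /andP[u0 u1].
have -> : x0 - (x + u *: (y - x)) = (1 - u) *: (x0 - x) + u *: (x0 - y).
  rewrite scalerBl scale1r !scalerBr !opprD !opprK !addrA.
  by rewrite [X in _ = X - _](addrAC _ (u *: x) (u *: x0)) subrK [RHS]addrAC.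
apply: le_lt_trans (ler_normD _ _) _.
rewrite !normrZ (ger0_norm u0) ger0_norm; last lra.
have max_lt : Num.max `|x0 - x| `|x0 - y| < r by rewrite gt_max xr yr.
have [le_x le_y] : `|x0 - x| <= Num.max `|x0 - x| `|x0 - y| /\
    `|x0 - y| <= Num.max `|x0 - x| `|x0 - y| by rewrite !le_max !lexx ?orbT.
nra.
Qed.

Lemma differentiable_approx {f : X -> Y} {p} : differentiable f p ->
  forall e, 0 < e -> exists2 d, 0 < d &
    forall z, `|z| < d -> `|f (p + z) - f p - 'd f p z| <= e * `|z|.
Proof.
move=> /diff_locally /eqaddoP f_o e e0.
have /nbhs_ballP [d d0 fd] := f_o e e0.
exists d => // z zd.
have /fd : ball 0 d z by rewrite -ball_normE /= sub0r normrN.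
by rewrite /= !fctE /cst opprD addrA (addrC z).
Qed.

Lemma differentiable_line_approx {f : X -> Y} {x h : X} {m : R} :
  differentiable f (x + m *: h) -> forall e, 0 < e -> exists2 d, 0 < d &
    forall s, m < s < m + d ->
    `|f (x + s *: h) - f (x + m *: h) - (s - m) *: 'd f (x + m *: h) h| <= e * (s - m).
Proof.
move=> f_diff e e0.
have h1_gt0 : 0 < `|h| + 1 by rewrite ltr_wpDl.
have [d d0 fd] := differentiable_approx f_diff _ (divr_gt0 e0 h1_gt0).
exists (d / (`|h| + 1)) => [|s /andP[ms sd]]; first exact: divr_gt0.
have sm_h : `|(s - m) *: h| = (s - m) * `|h| by rewrite normrZ ger0_norm //; lra.
have sm_lt : (s - m) * (`|h| + 1) < d by rewrite -ltr_pdivlMr //; lra.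
have := fd ((s - m) *: h) ltac:(rewrite sm_h; lra).
have -> : x + m *: h + (s - m) *: h = x + s *: h.
  by rewrite -addrA -scalerDl (addrC m) subrK.
rewrite linearZZ sm_h => /le_trans; apply.
by rewrite mulrAC ler_pdivrMr // -mulrA ler_wpM2l ?(ltW e0) //; lra.
Qed.

Lemma segment_mean_value (f : X -> Y) (x h : X) (K phi : R -> R) :
  (forall u, 0 <= u <= 1 -> differentiable f (x + u *: h)) ->
  (forall u, 0 <= u < 1 -> `|'d f (x + u *: h) h - 'd f x h| <= K u) ->
  (forall u, 0 < u <= 1 -> {for u, continuous phi}) ->
  (forall m s, 0 <= m -> m < s <= 1 -> (s - m) * K m <= phi s - phi m) ->
  `|f (x + h) - f x - 'd f x h| <= phi 1 - phi 0.
Proof.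
move=> f_diff K_bound phi_cont phi_incr.
pose D := 'd f x h.
pose g u := f (x + u *: h) - u *: D.
have := @mean_value_inequality _ _ g (fun u => 'd f (x + u *: h) h - D) phi 0 1 ler01.
rewrite /g !scale1r !scale0r addr0 subr0 addrAC; apply.
- move=> m m01; split; last exact: phi_cont.
  apply: continuousB; last by apply: cvgZ; [exact: cvg_id | exact: cvg_cst].
  have line_cont : {for m, continuous (fun u : R => x + u *: h)}.
    by apply: continuousD; [exact: cvg_cst | apply: cvgZ; [exact: cvg_id | exact: cvg_cst]].
  apply: (continuous_comp line_cont).
  by apply/differentiable_continuous/f_diff; lra.
- move=> m m01 e e0.
  have [d d0 fd] := differentiable_line_approx (f_diff m ltac:(lra)) e e0.
  exists d => // s sd.
  (* the terms in D cancel because s = (s - m) + m *)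
  have sD : s *: D = (s - m) *: D + m *: D by rewrite -scalerDl subrK.
  set A := f (x + s *: h); set B := f (x + m *: h); set P := (s - m) *: D.
  rewrite scalerBr sD -/P opprD !opprB addrA [A + _]addrA subrKA (addrAC (A - P)) subrK.
  exact: fd.
- move=> m s m0 msl; apply: le_trans (phi_incr m s m0 msl).
  by rewrite ler_wpM2l ?subr_ge0 ?K_bound //; lra.
Qed.

End NormedSpaces.

Section MajorantFunction.
Variables (R : realType) (psi dpsi d2psi : R -> R) (Rr : R).
Hypothesis psi_cont : {within [set t | 0 <= t < Rr], continuous psi}.
Hypothesis psi_derive : forall t, 0 < t < Rr ->
  is_derive t 1 psi (dpsi t) /\ is_derive t 1 dpsi (d2psi t).
Hypothesis dpsi_convex : forall a b s, 0 <= a < Rr -> 0 <= b < Rr -> 0 <= s <= 1 ->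
  dpsi ((1 - s) * a + s * b) <= (1 - s) * dpsi a + s * dpsi b.
Hypothesis dpsi_incr : forall a b, 0 <= a -> a < b -> b < Rr -> dpsi a < dpsi b.

Lemma psi_within_cont {a b : R} : 0 <= a -> b < Rr -> {within `[a, b], continuous psi}.
Proof.
move=> a0 bR; apply: continuous_subspaceW psi_cont => z /=.
by rewrite in_itv /= => /andP[az zb]; lra.
Qed.

Lemma psi_affine_cont (t d u : R) : 0 < t + u * d < Rr ->
  {for u, continuous (fun s : R => psi (t + s * d))}.
Proof.
move=> tud; have [[psi_d _] _] := psi_derive _ tud.
have affine_cont : {for u, continuous (fun s : R => t + s * d)}.
  by apply: cvgD; [exact: cvg_cst | apply: cvgM; [exact: cvg_id | exact: cvg_cst]].
apply: (continuous_comp affine_cont).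
by apply: differentiable_continuous; apply/derivable1_diffP.
Qed.

Lemma psi_tangent_le a b : 0 <= a -> a < b -> b < Rr ->
  dpsi a * (b - a) <= psi b - psi a.
Proof.
move=> a0 ab bR.
have dpsi_on : forall x, x \in `]a, b[ -> is_derive x 1 psi (dpsi x).
  by move=> x; rewrite in_itv /= => /andP[ax xb]; case: (psi_derive x ltac:(lra)).
have [c + ->] := MVT ab dpsi_on (psi_within_cont a0 bR).
rewrite in_itv /= => /andP[ac cb].
by rewrite ler_pM2r ?subr_gt0 //; apply/ltW/dpsi_incr; lra.
Qed.

Lemma psi_increment_ge t d m s : 0 <= t -> 0 < d -> 0 <= m -> m < s -> t + s * d < Rr ->
  (s - m) * d * (dpsi (t + m * d) - dpsi t) <=
  (psi (t + s * d) - dpsi t * (s * d)) - (psi (t + m * d) - dpsi t * (m * d)).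
Proof.
move=> t0 d0 m0 ms sR.
have := psi_tangent_le (t + m * d) (t + s * d) ltac:(nra) ltac:(nra) sR.
lra.
Qed.

Lemma epsi_ge0 t v : 0 <= t -> t < v -> v < Rr -> 0 <= epsi psi dpsi t v.
Proof. by move=> t0 tv vR; have := psi_tangent_le t v t0 tv vR; rewrite /epsi; lra. Qed.

Lemma epsi_le t v : 0 <= t -> t < v -> v < Rr ->
  epsi psi dpsi t v <= 1 / 2 * d2psi v * (v - t) ^+ 2.
Proof.
move=> t0 tv vR.
pose Q x := psi t + dpsi t * (x - t) + d2psi v / 2 * (x - t) ^+ 2.
have dQ (x : R) : is_derive x 1 Q (dpsi t + d2psi v * (x - t)).
  have -> : Q = cst (psi t) + dpsi t \*: (id - cst t) + (d2psi v / 2) \*: (id - cst t) ^+ 2.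
    by apply/funext => y; rewrite /Q !fctE.
  apply: is_derive_eq; rewrite !fctE /= !subr0 !scaler1 /GRing.scale /=.
  by rewrite add0r expr1 mulrA divfK ?pnatr_eq0.
have dH (x : R) : x \in `]t, v[ -> is_derive x 1 (psi \- Q) (dpsi x - (dpsi t + d2psi v * (x - t))).
  rewrite in_itv /= => /andP[tx xv].
  by case: (psi_derive x ltac:(lra)) => *; exact: is_deriveB.
have cH : {within `[t, v], continuous (psi \- Q)}.
  move=> x; apply: continuousB; first exact: psi_within_cont.
  by apply: (derivable_within_continuous (f := Q)) => y _; case: (dQ y).
have [c + E] := MVT tv dH cH.
rewrite in_itv /= => /andP[tc cv].
have dpsi_v : is_derive v 1 dpsi (d2psi v) by case: (psi_derive v ltac:(lra)).
have : slope dpsi t c <= d2psi v.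
  apply: le_trans (slope_le_derive dpsi_convex dpsi_v t0 tv vR).
  by apply: (slope_le dpsi_convex); lra.
rewrite /slope ler_pdivrMr ?subr_gt0 // => dpsi_c.
have Ht : (psi \- Q) t = 0 by rewrite /Q /= subrr mulr0 expr0n /= mulr0 !addr0 subrr.
have : (psi \- Q) v <= 0.
  by move: E; rewrite Ht subr0 => ->; apply: mulr_le0_ge0; lra.
rewrite /Q /epsi /=; lra.
Qed.


Section MajorantCondition.
Variables (X Y : normedModType R) (Om : set X) (f : X -> Y) (f' : X -> X -> Y)
  (x0 : X) (lam : R).
Hypothesis Rr_gt0 : 0 < Rr.
Hypothesis lam_gt0 : 0 < lam.
Hypothesis f_diff : forall x, Om x -> differentiable f x /\ ('d f x : X -> Y) = f' x.
Hypothesis f'_majorant : forall x y,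
  ball x0 (kappa x0 Om Rr) x -> ball x0 (kappa x0 Om Rr) y ->
  `|y - x| + `|x - x0| < Rr ->
  lam * opnorm (fun h => f' y h - f' x h) <= dpsi (`|y - x| + `|x - x0|) - dpsi `|x - x0|.

Lemma deriv_increment_le x h t d u :
  ball x0 (kappa x0 Om Rr) x -> ball x0 (kappa x0 Om Rr) (x + h) ->
  `|x - x0| <= t -> 0 < d -> `|h| <= d -> t + d < Rr -> 0 <= u <= 1 ->
  lam * `|'d f (x + u *: h) h - 'd f x h| <= `|h| ^+ 2 / d * (dpsi (t + u * d) - dpsi t).
Proof.
move=> x_ball xh_ball xt d_gt0 hd tdR u01; have /andP[u0 u1] := u01.
have := ball_segment x_ball xh_ball u01; rewrite (addrC x h) addrK => p_ball.
have [dfp dfp_eq] := f_diff _ (kappa_ball_sub Rr_gt0 _ p_ball).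
have [dfx dfx_eq] := f_diff _ (kappa_ball_sub Rr_gt0 _ x_ball).
have h0 := normr_ge0 h; have s0 := normr_ge0 (x - x0).
have uh_lt : u * `|h| + `|x - x0| < Rr by nra.
have := f'_majorant _ _ x_ball p_ball.
rewrite -dfp_eq -dfx_eq [_ + _ - x]addrC addKr normrZ ger0_norm // => /(_ uh_lt) maj.
have := diff_sub_le_opnorm h dfp dfx => /(ler_wpM2l (ltW lam_gt0)).
rewrite mulrA => /le_trans/(_ (ler_wpM2r h0 maj)) step.
have ud_lt : t + u * d < Rr by nra.
have incr := convex_increment_le dpsi_convex s0 xt h0 hd u0 ud_lt.
rewrite mulrAC ler_pdivlMr //; apply: le_trans (ler_wpM2r (ltW d_gt0) step) _.
by rewrite mulrAC expr2 [leRHS]mulrC [leRHS]mulrA (addrC (u * _)) ler_wpM2r.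
Qed.

Lemma Ef_le_epsi x y t v :
  ball x0 (kappa x0 Om Rr) x -> ball x0 (kappa x0 Om Rr) y ->
  0 <= t -> t < v -> v < Rr -> `|x - x0| <= t -> `|y - x| <= v - t ->
  lam * `|Ef f f' x y| <= epsi psi dpsi t v * (`|y - x| ^+ 2 / (v - t) ^+ 2).
Proof.
move=> x_ball y_ball t0 tv vR xt yx.
have y_eq : x + (y - x) = y by rewrite addrC subrK.
set h := y - x in y_eq yx *; set d := v - t in yx *.
have d_gt0 : 0 < d by rewrite subr_gt0.
have tdR : t + d < Rr by rewrite /d; lra.
pose c := `|h| ^+ 2 / (lam * d ^+ 2).
have c_ge0 : 0 <= c by rewrite divr_ge0 ?exprn_ge0 // ltW // mulr_gt0 ?exprn_gt0.
(* phi u is c times the Taylor remainder of psi at t, evaluated at t + u d,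
   up to an additive constant; K is its derivative. *)
pose K u := c * (d * (dpsi (t + u * d) - dpsi t)).
pose phi u := c * (psi (t + u * d) - dpsi t * (u * d)).
have [_ dfx_eq] := f_diff _ (kappa_ball_sub Rr_gt0 _ x_ball).
have mvi : `|Ef f f' x y| <= phi 1 - phi 0.
  rewrite /Ef -dfx_eq -{1}y_eq opprD addrA.
  apply: (@segment_mean_value _ _ _ f x h K).
  - move=> u u01; have := ball_segment x_ball y_ball u01.
    by move=> /(kappa_ball_sub Rr_gt0)/f_diff[].
  - move=> u u01.
    have -> : K u = lam^-1 * (`|h| ^+ 2 / d * (dpsi (t + u * d) - dpsi t)).
      by rewrite /K /c; field; rewrite ?gt_eqF.
    rewrite ler_pdivlMl //.
    by apply: deriv_increment_le => //; [rewrite y_eq | lra].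
  - move=> u u01; apply: cvgM; first exact: cvg_cst.
    apply: cvgB; first by apply: psi_affine_cont; nra.
    by apply: cvgM; [exact: cvg_cst | apply: cvgM; [exact: cvg_id | exact: cvg_cst]].
  - move=> m s m0 /andP[ms s1]; rewrite /K /phi mulrCA -mulrBr ler_wpM2l // mulrA.
    by apply: psi_increment_ge => //; nra.
suff <- : lam * (phi 1 - phi 0) = epsi psi dpsi t v * (`|h| ^+ 2 / d ^+ 2).
  by rewrite ler_wpM2l // ltW.
have tdv : t + d = v by rewrite /d addrC subrK.
rewrite /phi /c /epsi !mul0r addr0 mulr0 subr0 !mul1r tdv.
by rewrite -/d; field; rewrite ?gt_eqF.
Qed.

End MajorantCondition.

End MajorantFunction.

Arguments epsi_ge0 {R psi dpsi d2psi Rr} psi_cont psi_derive dpsi_incr {t v}.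
Arguments epsi_le {R psi dpsi d2psi Rr} psi_cont psi_derive dpsi_convex {t v}.
Arguments Ef_le_epsi {R psi dpsi d2psi Rr} psi_cont psi_derive dpsi_convex dpsi_incr
  {X Y Om f f' x0 lam} Rr_gt0 lam_gt0 f_diff f'_majorant {x y t v}.

Theorem lemma3p6 (R : realType) (X Y : completeNormedModType R)
  (Om : set X) (f : X -> Y) (f' : X -> X -> Y) (F : X -> set Y)
  (x0 x1 : X) (lam rho1 rho2 rx1 r0 rx0 Rr tstar : R) (psi dpsi d2psi : R -> R)
  (HOm : open Om)
  (Hfc : {within Om, continuous f})
  (Hfd : forall x, Om x -> differentiable f x /\ ('d f x : X -> Y) = f' x)
  (Hf'c : forall x, Om x -> forall e, 0 < e -> exists2 d, 0 < d &
      forall y, Om y -> `|y - x| < d -> opnorm (fun h => f' y h - f' x h) < e)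
  (HF : closed [set p : X * Y | F p.1 p.2])
  (Hx0 : Om x0) (Hx1 : Om x1) (Hlam : 0 < lam)
  (H0 : Linv f f' F x0 0 x1)
  (Hrho1 : 0 < rho1) (Hrho2 : 0 < rho2) (Hball1 : ball x1 rho1 `<=` Om)
  (Hsr : single_valued_lipschitz (Linv f f' F x0) (ball (0 : Y) rho2)
           (ball x1 rho1) lam)
  (Hrx1 : 0 < rx1) (Hr0 : 0 < r0) (Hrx0 : 0 < rx0)
  (Hreg : forall x, ball x0 rx0 x ->
     lam * opnorm (fun h => f' x h - f' x0 h) < 1 /\
     single_valued_lipschitz (Linv f f' F x) (ball (0 : Y) r0) (ball x1 rx1)
       (lam / (1 - lam * opnorm (fun h => f' x h - f' x0 h))))
  (HR : 0 < Rr)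
  (Hpsic : {within [set t | 0 <= t < Rr], continuous psi})
  (Hdpsic : {within [set t | 0 <= t < Rr], continuous dpsi})
  (Hd2psic : {within [set t | 0 <= t < Rr], continuous d2psi})
  (Hpsid : forall t, 0 < t < Rr ->
     is_derive t 1 psi (dpsi t) /\ is_derive t 1 dpsi (d2psi t))
  (Hmaj : forall x y, ball x0 (kappa x0 Om Rr) x -> ball x0 (kappa x0 Om Rr) y ->
     `|y - x| + `|x - x0| < Rr ->
     lam * opnorm (fun h => f' y h - f' x h)
       <= dpsi (`|y - x| + `|x - x0|) - dpsi `|x - x0|)
  (H10 : `|x1 - x0| <= psi 0) (Hpsi0 : 0 < psi 0) (Hdpsi0 : dpsi 0 = -1)
  (Hconv : forall a b s, 0 <= a < Rr -> 0 <= b < Rr -> 0 <= s <= 1 ->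
     dpsi ((1 - s) * a + s * b) <= (1 - s) * dpsi a + s * dpsi b)
  (Hincr : forall a b, 0 <= a -> a < b -> b < Rr -> dpsi a < dpsi b)
  (Hzero : exists2 t, 0 < t < Rr & psi t = 0)
  (Htstar : 0 <= tstar < Rr /\ psi tstar = 0 /\
            forall t, 0 <= t < Rr -> psi t = 0 -> tstar <= t)
  (Htsr : tstar <= rx0)
  (Htsr0 : d2psi tstar * psi 0 ^+ 2 / (2 * lam) < r0) :
  forall (x y : X) (t v : R),
    ball x0 (kappa x0 Om Rr) x -> ball x0 (kappa x0 Om Rr) y ->
    0 <= t -> t < v -> v < Rr ->
    `|x - x0| <= t -> `|y - x| <= v - t ->
    lam * `|Ef f f' x y| <= epsi psi dpsi t v * (`|y - x| ^+ 2 / (v - t) ^+ 2)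
    /\ epsi psi dpsi t v * (`|y - x| ^+ 2 / (v - t) ^+ 2)
       <= 1 / 2 * d2psi v * (v - t) ^+ 2.
Proof.
move=> x y t v x_ball y_ball t0 tv vR xt yx.
split; first exact: (Ef_le_epsi Hpsic Hpsid Hconv Hincr HR Hlam Hfd Hmaj).
have ratio_le1 : `|y - x| ^+ 2 / (v - t) ^+ 2 <= 1.
  rewrite ler_pdivrMr ?exprn_gt0 ?subr_gt0 // mul1r.
  by rewrite lerXn2r ?nnegrE ?subr_ge0 // ltW.
apply: le_trans (epsi_le Hpsic Hpsid Hconv t0 tv vR).
by rewrite -[leRHS]mulr1 ler_wpM2l // (epsi_ge0 Hpsic Hpsid Hincr).
Qed.
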